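(* Let $E\subset\partial\mathbb{D}$ be closed and suppose $E$ contains no pair of antipodal points (no $\zeta$ with $\zeta,-\zeta\in E$). Then there is $\alpha\in[0,2\pi)$ such that $\{-ie^{i\alpha},\ e^{i\alpha},\ ie^{i\alpha}\}\subset\partial\mathbb{D}\setminus E$.
   Context: $\partial\mathbb{D}$ is the unit circle in $\mathbb{C}$. *)

From Stdlib Require Import Reals.
From Coquelicot Require Import Coquelicot.
Open Scope R_scope.

Definition expi (a : R) : C := (cos a, sin a).

Definition unit_circle (z : C) : Prop := Cmod z = 1.

(** The sets [P] of angles [t] with [e^{it}] in [E] and [Q] of angles with
    [-e^{it}] in [E] are closed and, as [E] has no antipodal pair, disjoint.
    They cannot cover [[0, π]]: by connectedness [[0, π]] would lie in one of
    them, but [0 ∈ P] iff [π ∈ Q] and [0 ∈ Q] iff [π ∈ P].  Hence some pair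
    [±e^{iθ}] avoids [E].  Of the two points [±ie^{iθ}] one avoids [E] too,
    and it is the middle point of three consecutive quarter turns
    [e^{iθ}, ±ie^{iθ}, -e^{iθ}] (up to orientation) missing [E]. *)

From Stdlib Require Import Reals Lra Classical.
From Coquelicot Require Import Coquelicot.
Open Scope R_scope.

Lemma expi_add_PI (t : R) : expi (t + PI) = Copp (expi t).
Proof. unfold expi, Copp; simpl. now rewrite neg_cos, neg_sin. Qed.

Lemma expi_add_2PI (t : R) : expi (t + 2 * PI) = expi t.
Proof.
  unfold expi. replace (t + 2 * PI) with (t + PI + PI) by ring.
  now rewrite !neg_cos, !neg_sin, !Ropp_involutive.
Qed.

Lemma expi_add_2PI_mult (t : R) (k : Z) : expi (t + 2 * PI * IZR k) = expi t.
Proof.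
  induction k as [| k IHk | k IHk] using Z.peano_ind.
  - now rewrite Rmult_0_r, Rplus_0_r.
  - rewrite succ_IZR, <- IHk, <- (expi_add_2PI (t + 2 * PI * IZR k)). f_equal. ring.
  - rewrite <- Z.sub_1_r, minus_IZR, <- IHk, <- (expi_add_2PI (t + 2 * PI * (IZR k - 1))).
    f_equal. ring.
Qed.

Lemma expi_mod_2PI (t : R) : exists a, 0 <= a < 2 * PI /\ expi a = expi t.
Proof.
  pose proof PI_RGT_0 as HPI.
  set (q := t / (2 * PI)).
  pose proof (Rplus_Int_part_frac_part q) as Hq.
  destruct (base_fp q) as [Hf0 Hf1].
  set (k := Int_part q) in *. set (f := frac_part q) in *.
  exists (2 * PI * f). split; [split; nra |].
  rewrite <- (expi_add_2PI_mult (2 * PI * f) k). f_equal.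
  replace t with (2 * PI * q) by (unfold q; field; lra).
  rewrite Hq. ring.
Qed.

Lemma Ci_mul_expi (t : R) : Cmult Ci (expi t) = expi (t + PI / 2).
Proof.
  unfold expi, Cmult, Ci; simpl. rewrite cos_plus, sin_plus, cos_PI2, sin_PI2.
  f_equal; ring.
Qed.

Lemma Copp_Ci_mul_expi (t : R) : Cmult (Copp Ci) (expi t) = expi (t - PI / 2).
Proof.
  unfold expi, Cmult, Ci, Copp; simpl. rewrite cos_minus, sin_minus, cos_PI2, sin_PI2.
  f_equal; ring.
Qed.

Lemma unit_circle_expi (t : R) : unit_circle (expi t).
Proof.
  unfold unit_circle, expi, Cmod; cbn [fst snd].
  rewrite <- sqrt_1. f_equal.
  pose proof (sin2_cos2 t) as H. unfold Rsqr in H. nra.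
Qed.

Lemma continuous_expi (t : R) : continuous expi t.
Proof.
  apply (continuous_comp_2 cos sin pair); [apply continuous_cos | apply continuous_sin |].
  intros P [eps HP]. exists eps. intros [u v] Huv. exact (HP _ Huv).
Qed.

Lemma closed_Copp (E : C -> Prop) : closed E -> closed (fun z => E (Copp z)).
Proof. intro HE. apply closed_comp; [intro z; apply (filterlim_opp z) | exact HE]. Qed.

Lemma closed_adherent {T : UniformSpace} (P : T -> Prop) (x : T) :
  closed P -> (forall eps : posreal, exists y, ball x eps y /\ P y) -> P x.
Proof.
  intros HP Hadh. apply HP. intros [eps Heps].
  destruct (Hadh eps) as [y [Hy Py]]. exact (Heps y Hy Py).
Qed.

(* With [m] the supremum of [P ∩ [a, b]]: [P m] by closedness, and if [m < b]
   the points just right of [m] lie in [Q], so [Q m] as well. *)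
Lemma interval_closed_cover (P Q : R -> Prop) (a b : R) :
  a <= b -> closed P -> closed Q ->
  (forall t, a <= t <= b -> P t \/ Q t) ->
  (forall t, a <= t <= b -> ~ (P t /\ Q t)) ->
  P a -> P b.
Proof.
  intros Hab HP HQ Hcov Hdisj Pa.
  set (S := fun t => a <= t <= b /\ P t).
  destruct (completeness S) as [m [Hub Hlub]].
  - exists b. intros t [Ht _]. lra.
  - exists a. split; [lra | exact Pa].
  - assert (Ham : a <= m) by (apply Hub; split; [lra | exact Pa]).
    assert (Hmb : m <= b) by (apply Hlub; intros t [Ht _]; lra).
    assert (Pm : P m).
    { apply (closed_adherent P m HP). intros eps.
      apply NNPP. intro Hnone.
      assert (Hbound : is_upper_bound S (m - eps)).
      { intros t [Ht Pt]. apply Rnot_lt_le. intro Hlt.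
        apply Hnone. exists t. split; [| exact Pt].
        assert (t <= m) by (apply Hub; split; assumption).
        change (Rabs (t - m) < eps). apply Rabs_def1; lra. }
      apply Hlub in Hbound. pose proof (cond_pos eps). lra. }
    destruct (Rle_lt_or_eq_dec m b Hmb) as [Hlt | <-]; [exfalso | exact Pm].
    apply (Hdisj m); [lra | split; [exact Pm |]].
    apply (closed_adherent Q m HQ). intros eps.
    pose proof (cond_pos eps).
    set (t := Rmin (m + eps / 2) b).
    assert (Hmt : m < t) by (apply Rmin_glb_lt; lra).
    assert (Htb : t <= b) by apply Rmin_r.
    assert (Htm : t <= m + eps / 2) by apply Rmin_l.
    exists t. split; [change (Rabs (t - m) < eps); apply Rabs_def1; lra |].
    destruct (Hcov t) as [Pt | Qt]; [lra | | exact Qt].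
    exfalso. assert (t <= m) by (apply Hub; split; [lra | exact Pt]). lra.
Qed.

Lemma exists_antipodal_pair_outside (E : C -> Prop) :
  closed E -> (forall z, ~ (E z /\ E (Copp z))) ->
  exists t, ~ E (expi t) /\ ~ E (Copp (expi t)).
Proof.
  intros HE Hanti. apply NNPP. intro Hnone.
  set (P := fun t => E (expi t)).
  set (Q := fun t => E (Copp (expi t))).
  assert (HP : closed P) by exact (closed_comp expi E continuous_expi HE).
  assert (HQ : closed Q)
    by exact (closed_comp expi _ continuous_expi (closed_Copp E HE)).
  assert (Hcov : forall t, 0 <= t <= PI -> P t \/ Q t).
  { intros t _. apply NNPP. intro H. apply Hnone. exists t.
    split; intro; apply H; [left | right]; assumption. }
  assert (Hdisj : forall t, 0 <= t <= PI -> ~ (P t /\ Q t))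
    by (intros t _; apply Hanti).
  assert (HPI : expi PI = Copp (expi 0)) by (rewrite <- expi_add_PI; f_equal; ring).
  assert (HPI' : Copp (expi PI) = expi 0)
    by (rewrite <- expi_add_PI, <- (expi_add_2PI 0); f_equal; ring).
  apply (Hanti (expi 0)).
  pose proof PI_RGT_0.
  destruct (Hcov 0) as [P0 | Q0]; [lra | split; [exact P0 |] | split; [| exact Q0]].
  - pose proof (interval_closed_cover P Q 0 PI) as HPPI.
    unfold P in HPPI. rewrite <- HPI. apply HPPI; auto; lra.
  - pose proof (interval_closed_cover Q P 0 PI) as HQPI.
    unfold Q in HQPI. rewrite <- HPI'.
    apply HQPI; auto; [lra | | intros t Ht [Qt Pt]; exact (Hdisj t Ht (conj Pt Qt))].
    intros t Ht. destruct (Hcov t Ht); [right | left]; assumption.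
Qed.

Lemma exists_quarter_turns_outside (E : C -> Prop) :
  closed E -> (forall z, ~ (E z /\ E (Copp z))) ->
  exists t, ~ E (expi (t - PI / 2)) /\ ~ E (expi t) /\ ~ E (expi (t + PI / 2)).
Proof.
  intros HE Hanti.
  destruct (exists_antipodal_pair_outside E HE Hanti) as [s [Hs Hs']].
  rewrite <- expi_add_PI in Hs'.
  destruct (classic (E (expi (s + PI / 2)))) as [Hmid | Hmid].
  - exists (s + PI / 2 + PI). repeat split.
    + now replace (s + PI / 2 + PI - PI / 2) with (s + PI) by ring.
    + rewrite expi_add_PI. intro Hopp. exact (Hanti _ (conj Hmid Hopp)).
    + replace (s + PI / 2 + PI + PI / 2) with (s + 2 * PI) by field.
      now rewrite expi_add_2PI.
  - exists (s + PI / 2). repeat split.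
    + now replace (s + PI / 2 - PI / 2) with s by ring.
    + exact Hmid.
    + now replace (s + PI / 2 + PI / 2) with (s + PI) by field.
Qed.

Theorem lemma1 (E : C -> Prop)
  (HEsub : forall z, E z -> unit_circle z)
  (HEclosed : closed E)
  (Hanti : forall z : C, ~ (E z /\ E (Copp z))) :
  exists alpha : R, 0 <= alpha < 2 * PI /\
    (unit_circle (Cmult (Copp Ci) (expi alpha)) /\ ~ E (Cmult (Copp Ci) (expi alpha))) /\
    (unit_circle (expi alpha) /\ ~ E (expi alpha)) /\
    (unit_circle (Cmult Ci (expi alpha)) /\ ~ E (Cmult Ci (expi alpha))).
Proof.
  destruct (exists_quarter_turns_outside E HEclosed Hanti) as [t [Hl [Hc Hr]]].
  destruct (expi_mod_2PI t) as [alpha [Halpha Heq]].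
  exists alpha. rewrite Heq, Copp_Ci_mul_expi, Ci_mul_expi.
  repeat split; auto using unit_circle_expi; lra.
Qed.
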